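(* Let $k\ge2$, $1\le m<k$, and alternatives $\ell=1,\dots,k$ with i.i.d. replications (independent across alternatives) whose means are pairwise distinct and ordered $\mu_{\langle 1\rangle}>\dots>\mu_{\langle k\rangle}$, satisfying Assumptions 1–4 of the context. For $i\in\{1,\dots,m\}$, $j\in\{m+1,\dots,k\}$ and $r_{\langle i\rangle},r_{\langle j\rangle}\ge0$ define $G_{ij}(r_{\langle i\rangle},r_{\langle j\rangle})=\inf_{x\in\mathbb R}\big(r_{\langle i\rangle}\Lambda^*_{\langle i\rangle}(x)+r_{\langle j\rangle}\Lambda^*_{\langle j\rangle}(x)\big)$. Then on $\{(r_{\langle i\rangle},r_{\langle j\rangle})>0\}$, $G_{ij}$ is strictly increasing in $r_{\langle i\rangle}$ and strictly increasing in $r_{\langle j\rangle}$; moreover $G_{ij}(r_{\langle i\rangle},r_{\langle j\rangle})=0$ whenever $\min(r_{\langle i\rangle},r_{\langle j\rangle})=0$.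
   Context: $\bar X_\ell(n)$ is the sample mean of $n$ replications of alternative $\ell$, $\Lambda^{(n)}_\ell(\lambda)=\log\mathbb E[e^{\lambda\bar X_\ell(n)}]$. Assumption 1: $\Lambda_\ell(\lambda)=\lim_{n\to\infty}\frac1n\Lambda^{(n)}_\ell(n\lambda)$ exists as an extended real number for all $\lambda$. With $\mathcal D_{\Lambda_\ell}=\{\lambda:\Lambda_\ell(\lambda)<\infty\}$, interior $\mathcal D^o_{\Lambda_\ell}$, and $\mathcal F_\ell=\{\Lambda'_\ell(\lambda):\lambda\in\mathcal D^o_{\Lambda_\ell}\}$, interior $\mathcal F^o_\ell$: Assumption 2: $0\in\mathcal D^o_{\Lambda_\ell}$. Assumption 3: $\Lambda_\ell$ strictly convex, continuous on $\mathcal D^o_{\Lambda_\ell}$ and steep ($|\Lambda'_\ell(\lambda_n)|\to\infty$ along sequences tending to a boundary point of $\mathcal D^o_{\Lambda_\ell}$). Assumption 4: $[\mu_{\langle k\rangle},\mu_{\langle1\rangle}]\subset\bigcap_\ell\mathcal F^o_\ell$. $\Lambda^*_\ell(x)=\sup_\lambda\{\lambda x-\Lambda_\ell(\lambda)\}$. *)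

From HB Require Import structures.
From mathcomp Require Import all_boot all_order all_algebra.
From mathcomp Require Import all_classical all_reals all_analysis.
Set Implicit Arguments. Unset Strict Implicit. Unset Printing Implicit Defensive.
Import Order.TTheory GRing.Theory Num.Theory.
Import numFieldNormedType.Exports.
Local Open Scope classical_set_scope.
Local Open Scope ring_scope.

Section ldp_defs.
Context {d : measure_display} {T : measurableType d} {R : realType}.
Variable P : probability T R.

(* For i.i.d. replications, (1/n) Lambda^(n)(n l) = Lambda(l) for every n,
   so this is the limit of Assumption 1. *)
Definition cgf (X : T -> R) (l : R) : \bar R :=
  match ('E_P[fun w => expR (l * X w)])%E with
  | r%:E => (ln r)%:E
  | +oo%E => +oo%E
  | -oo%E => -oo%E
  end.

Definition cgf_dom (X : T -> R) : set R := [set l | (cgf X l < +oo)%E].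

Definition cgfR (X : T -> R) (l : R) : R := fine (cgf X l).
Definition cgf' (X : T -> R) (l : R) : R := derive1 (cgfR X) l.

Definition cgf_F (X : T -> R) : set R := cgf' X @` interior (cgf_dom X).

Definition rate (X : T -> R) (x : R) : \bar R :=
  ereal_sup [set ((l * x)%:E - cgf X l)%E | l in [set: R]].
End ldp_defs.

Section assumptions.
Context {d : measure_display} {T : measurableType d} {R : realType}.
Variable P : probability T R.

Definition assumption2 (X : T -> R) : Prop := interior (cgf_dom P X) 0.

Definition strictly_convex_on (D : set R) (f : R -> R) : Prop :=
  forall a b t, D a -> D b -> a != b -> 0 < t < 1 ->
    f (t * a + (1 - t) * b) < t * f a + (1 - t) * f b.

Definition steep (X : T -> R) : Prop :=
  forall (u : nat -> R) (b : R),
    (forall n, interior (cgf_dom P X) (u n)) ->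
    ~ interior (cgf_dom P X) b ->
    u @ \oo --> b ->
    (fun n => `|cgf' P X (u n)|) @ \oo --> +oo.

Definition assumption3 (X : T -> R) : Prop :=
  [/\ (forall l, interior (cgf_dom P X) l -> derivable (cgfR P X) l 1),
      strictly_convex_on (cgf_dom P X) (cgfR P X),
      (forall l, interior (cgf_dom P X) l -> {for l, continuous (cgfR P X)}) &
      steep X].
End assumptions.

(* G_ij(ri, rj) = inf_x ( ri Lambda_i^*(x) + rj Lambda_j^*(x) )  (0 * +oo = 0) *)
Definition Gfun {d : measure_display} {T : measurableType d} {R : realType}
  (P : probability T R) (Xi Xj : T -> R) (ri rj : R) : \bar R :=
  ereal_inf [set (ri%:E * rate P Xi x + rj%:E * rate P Xj x)%E | x in [set: R]].

From HB Require Import structures.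
From mathcomp Require Import all_boot all_order all_algebra.
From mathcomp Require Import all_classical all_reals all_analysis.
From mathcomp Require Import measurable_realfun ring lra.
Import Order.TTheory GRing.Theory Num.Theory.
Import numFieldNormedType.Exports.
Local Open Scope classical_set_scope.
Local Open Scope ring_scope.

(* Write I for the rate function of an alternative with mean mu. By Jensen,
   I >= 0 = I mu, and I is convex along rays from mu. Since the cumulant
   generating function is differentiable at the interior point 0 and strictly
   convex, I is bounded below away from mu and is o(|x - mu|) at mu; as a
   supremum of affine functions it is lower semicontinuous, and it is finite
   on F.
   Let G(r1) = inf_x (r1 I1 x + r2 I2 x) with means c1 != c2. Moving from c1
   towards c2 lowers I2 linearly but raises I1 only sublinearly, so
   G(r1) < r2 I2(c1). Hence near c1 the term r2 I2 alone, by lower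
   semicontinuity, exceeds G(r1) by a fixed margin, while away from c1 the
   bound I1 >= eta > 0 makes r1' I1 + r2 I2 exceed it by (r1' - r1) eta.
   If a weight vanishes, evaluating at the other mean gives 0. *)
Section real_functions.
Context {R : realType}.

Lemma is_derive_approx {f : R -> R} {x df : R} : is_derive x 1 f df ->
  forall e, 0 < e -> exists2 del, 0 < del &
    forall h, `|h| < del -> `|f (x + h) - f x - h * df| <= e * `|h|.
Proof.
case=> fx <- e e0; move/cvgrPdist_le: fx => /(_ e e0).
rewrite near_withinE => /nbhs_ballP[del /= del0 near_x].
exists del => // h hdel; have [->|h0] := eqVneq h 0.
  by rewrite addr0 subrr mul0r subr0 normr0 mulr0.
have := near_x h; rewrite /ball /= sub0r normrN => /(_ hdel h0).
rewrite /= [_%:A]mulr1 => approx.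
have -> : f (x + h) - f x - h * 'D_1 f x =
    - h * ('D_1 f x - h^-1 * (f (h + x) - f x)).
  by rewrite (addrC h); field.
by rewrite normrM normrN mulrC ler_wpM2r.
Qed.

Lemma strictly_convex_tangent {D : set R} {f : R -> R} {c df : R} :
  strictly_convex_on D f -> D c -> is_derive c 1 f df ->
  forall l, D l -> f c + (l - c) * df <= f l.
Proof.
move=> fcvx Dc fdf l Dl; have [->|lc] := eqVneq l c.
  by rewrite subrr mul0r addr0.
have dist0 : 0 < `|l - c| by rewrite normr_gt0 subr_eq0.
apply/ler_addgt0Pr => e e0.
have [del del0 approx] := is_derive_approx fdf _ (divr_gt0 e0 dist0).
set t := Num.min (1 / 2) (del / (2 * `|l - c|)).
have t0 : 0 < t by rewrite lt_min !divr_gt0 ?mulr_gt0.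
have t1 : t < 1 by rewrite gt_min; apply/orP; left; lra.
have tdist : t * `|l - c| < del.
  have : t <= del / (2 * `|l - c|) by rewrite ge_min lexx orbT.
  rewrite -(ler_pM2r dist0) [X in _ <= X](_ : _ = del / 2); first lra.
  by field; rewrite lt0r_neq0.
have := approx (t * (l - c)); rewrite normrM gtr0_norm // => /(_ tdist).
have -> : e / `|l - c| * (t * `|l - c|) = t * e by field; rewrite lt0r_neq0.
move=> /ler_normlP[below _].
have := fcvx l c t Dl Dc lc; rewrite t0 t1 => /(_ isT).
have -> : t * l + (1 - t) * c = c + t * (l - c) by ring.
move=> above.
have : t * (f c + (l - c) * df - (f l + e)) < 0 by lra.
by rewrite pmulr_rlt0 // subr_lt0 => /ltW.
Qed.

Lemma interior_ball {A : set R} {x : R} : interior A x ->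
  exists2 r, 0 < r & forall y, `|y - x| < r -> interior A y.
Proof.
move=> /(open_interior A) /nbhs_ballP[r r0 ball_sub]; exists r => // y xy.
by apply: ball_sub; rewrite /ball /= distrC.
Qed.

End real_functions.

Section fin_num_integral.
Context {d : measure_display} {T : measurableType d} {R : realType}.
Variable mu : {measure set T -> \bar R}.

Lemma fin_num_integral_integrable (f : T -> R) : measurable_fun setT f ->
  (\int[mu]_w (f w)%:E)%E \is a fin_num -> mu.-integrable setT (EFin \o f).
Proof.
move=> mf; rewrite integralE => fin.
set F := EFin \o f.
have posF := @integral_ge0 _ _ _ mu setT (F^\+)%E (fun x _ => funepos_ge0 _ x).
have negF := @integral_ge0 _ _ _ mu setT (F^\-)%E (fun x _ => funeneg_ge0 _ x).
have pos_lty : (\int[mu]_x (F^\+)%E x < +oo)%E.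
  rewrite ltey; apply: contraTN fin => /eqP ->.
  by move: negF; case: (\int[mu]_x (F^\-)%E x)%E.
have neg_lty : (\int[mu]_x (F^\-)%E x < +oo)%E.
  rewrite ltey; apply: contraTN fin => /eqP ->.
  by move: posF; case: (\int[mu]_x (F^\+)%E x)%E.
apply/integrableP; split; first exact/measurable_EFinP.
rewrite (_ : (fun x => `|F x|)%E = (F^\+ \+ F^\-)%E); last first.
  by rewrite -fune_abse.
rewrite ge0_integralD; first exact: lte_add_pinfty.
- exact: measurableT.
- by move=> x _; exact: funepos_ge0.
- exact/measurable_funepos/measurable_EFinP.
- by move=> x _; exact: funeneg_ge0.
- exact/measurable_funeneg/measurable_EFinP.
Qed.

End fin_num_integral.

Section jensen.
Context {d : measure_display} {T : measurableType d} {R : realType}.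
Variable P : probability T R.

Lemma jensen_expR {X : {RV P >-> R}} {mu : R} (l : R) : ('E_P[X] = mu%:E)%E ->
  ((expR (l * mu))%:E <= 'E_P[fun w => expR (l * X w)])%E.
Proof.
move=> EX; set Y := fun w => expR (l * X w).
have [->|EY] := eqVneq ('E_P[Y])%E +oo%E; first by rewrite leey.
have mX : measurable_fun setT (X : T -> R) := measurable_funPT X.
have X1 : (X : T -> R) \in Lfun P 1.
  apply/Lfun1_integrable/fin_num_integral_integrable => //.
  by rewrite -expectation_def EX.
have Yint : P.-integrable setT (EFin \o Y).
  apply/integrableP; split.
    by apply/measurable_EFinP/measurableT_comp => //; exact: measurable_funM.
  under eq_integral do rewrite /= ger0_norm ?expR_ge0 //.
  by rewrite ltey; move: EY; rewrite unlock.
(* the tangent line of [expR] at [l * mu], evaluated at [l * X] *)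
set c := expR (l * mu).
set Z := (cst (c - c * l * mu) \+ (c * l) \o* (X : T -> R))%R.
have EZ : ('E_P[Z] = c%:E)%E.
  rewrite expectationD ?Lfun_cst ?Lfun_scale // expectationZl // EX.
  by rewrite expectation_cst -EFinM -EFinD; congr (_%:E); ring.
rewrite -EZ unlock; apply: le_integral => //.
- by apply/Lfun1_integrable/rpredD; [exact: Lfun_cst | exact: Lfun_scale].
- move=> x _; rewrite lee_fin /Z /Y /=.
  have := expR_ge1Dx (l * X x - l * mu); rewrite expRD expRN -/c.
  have -> : c - c * l * mu + X x * (c * l) = (1 + (l * X x - l * mu)) * c.
    by ring.
  by rewrite ler_pdivlMr // expR_gt0.
Qed.

End jensen.

Section rate_function.
Context {d : measure_display} {T : measurableType d} {R : realType}.
Context {P : probability T R} {X : {RV P >-> R}} {mu : R}.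
Hypothesis EX : ('E_P[X] = mu%:E)%E.

Local Notation D := (cgf_dom P X).
Local Notation f := (cgfR P X).
Local Notation I := (rate P X).

Lemma cgf_neqNy l : cgf P X l != -oo%E.
Proof.
rewrite /cgf; move: (expectation_ge0 P (fun w => expR_ge0 (l * X w))).
by case: ('E_P[_])%E.
Qed.

Lemma cgfE l : D l -> cgf P X l = (f l)%:E.
Proof. by move=> Dl; rewrite fineK // fin_numE cgf_neqNy -ltey. Qed.

Lemma cgf_notin_dom l : ~ D l -> cgf P X l = +oo%E.
Proof. by move=> Dl; apply/eqP; rewrite -leye_eq leNgt; apply/negP. Qed.

Lemma cgf0 : cgf P X 0 = 0%E.
Proof.
rewrite /cgf (_ : (fun w => expR (0 * X w)) = cst 1).
  by rewrite expectation_cst ln1.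
by apply/funext => w; rewrite mul0r expR0.
Qed.

Lemma cgf_dom0 : D 0.
Proof. by rewrite /cgf_dom /= cgf0. Qed.

Lemma cgfR0 : f 0 = 0.
Proof. by rewrite /cgfR cgf0. Qed.

Lemma cgf_ge_mean l : ((l * mu)%:E <= cgf P X l)%E.
Proof.
have := jensen_expR P l EX; rewrite /cgf.
case: ('E_P[_])%E => [r|_|//]; last by rewrite leey.
rewrite lee_fin => expR_le; rewrite lee_fin -ler_expR lnK //.
by rewrite posrE (lt_le_trans (expR_gt0 _) expR_le).
Qed.

Lemma cgfR_ge_mean {l} : D l -> l * mu <= f l.
Proof. by move=> Dl; rewrite -lee_fin -cgfE //; exact: cgf_ge_mean. Qed.

Lemma le_rate {l} x : D l -> ((l * x - f l)%:E <= I x)%E.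
Proof. by move=> Dl; apply: ereal_sup_ubound; exists l; rewrite // cgfE. Qed.

Lemma rate_le x c : (forall l, D l -> l * x - f l <= c) -> (I x <= c%:E)%E.
Proof.
move=> affine_le; apply: ge_ereal_sup => _ [l _ <-].
have [Dl|Dl] := pselect (D l); last by rewrite cgf_notin_dom // addeNy leNye.
by rewrite cgfE // -EFinB lee_fin affine_le.
Qed.

Lemma rate_ge0 x : (0 <= I x)%E.
Proof. by have := le_rate x cgf_dom0; rewrite mul0r cgfR0 subr0. Qed.

Lemma rate_mean : I mu = 0%E.
Proof.
apply/le_anti; rewrite rate_ge0 andbT.
by apply: rate_le => l Dl; rewrite subr_le0 cgfR_ge_mean.
Qed.

Lemma rate_convex_mean a t : 0 <= t <= 1 ->
  (I (t * a + (1 - t) * mu) <= t%:E * I a)%E.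
Proof.
move=> /andP[t0 t1]; have [->|tneq0] := eqVneq t 0.
  by rewrite mul0r add0r subr0 mul1r rate_mean mul0e.
have tgt0 : 0 < t by rewrite lt_def tneq0 t0.
have := rate_ge0 a; case Ia: (I a) => [A| |] // _; last first.
  by rewrite mulry gtr0_sg // mul1e leey.
rewrite -EFinM; apply: rate_le => l Dl.
have lA : l * a - f l <= A by rewrite -lee_fin -Ia le_rate.
have := cgfR_ge_mean Dl.
have -> : l * (t * a + (1 - t) * mu) - f l =
  t * (l * a - f l) + (1 - t) * (l * mu - f l) by ring.
nra.
Qed.

Lemma rate_lsc {y A kap} : I y = A%:E -> 0 < kap -> exists2 rho, 0 < rho &
  forall x, `|x - y| < rho -> ((A - kap)%:E <= I x)%E.
Proof.
move=> Iy kap0.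
have : ((A - kap / 2)%:E < I y)%E by rewrite Iy lte_fin; lra.
move/ereal_sup_gt => [_ [l _ <-]].
have [Dl|Dl] := pselect (D l); last by rewrite cgf_notin_dom // addeNy.
rewrite cgfE // -EFinB lte_fin => affine_gt.
have l1 : 0 < `|l| + 1 by rewrite ltr_wpDl.
exists (kap / 2 / (`|l| + 1)); first by rewrite !divr_gt0.
move=> x xy; apply: le_trans (le_rate x Dl); rewrite lee_fin.
have : `|l * (x - y)| <= kap / 2.
  rewrite normrM (@le_trans _ _ ((`|l| + 1) * `|x - y|)) ?ler_wpM2r ?lerDl //.
  by rewrite -ler_pdivlMl // mulrC ltW.
move=> /ler_normlP[]; lra.
Qed.

Hypotheses (A2 : assumption2 P X) (A3 : assumption3 P X).

Let cgfR_derivable : forall l, interior D l -> derivable f l 1.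
Proof. by case: A3. Qed.

Let cgfR_strictly_convex : strictly_convex_on D f.
Proof. by case: A3. Qed.

Lemma cgf_dom_near0 : exists2 r, 0 < r & forall l, `|l| < r -> interior D l.
Proof.
have [r r0 ball_sub] := interior_ball A2.
by exists r => // l lr; apply: ball_sub; rewrite subr0.
Qed.

(* by Jensen, [f l - l * mu] attains its minimum [0] at the interior
   point [0] *)
Lemma is_derive0_centered_cgfR : is_derive (0 : R) 1 (fun l => f l - l * mu) 0.
Proof.
have [r r0 near0] := cgf_dom_near0.
have in_ball t : t \in `](- r), r[ -> interior D t.
  rewrite in_itv /= => /andP[? ?].
  by apply: near0; rewrite ltr_norml; apply/andP.
apply: (@derive1_at_min _ _ (- r) r).
- by rewrite (le_trans _ (ltW r0)) // oppr_le0 ltW.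
- move=> t /in_ball Dt; apply: derivableB; first exact: cgfR_derivable.
  exact: derivableM.
- by rewrite in_itv /= oppr_lt0 r0.
- move=> t /in_ball /interior_subset Dt.
  by rewrite mul0r cgfR0 subr0 subr_ge0 cgfR_ge_mean.
Qed.

Lemma centered_cgfR_small {e} : 0 < e -> exists2 h, 0 < h &
  [/\ interior D h, interior D (- h), f h - h * mu <= e * h
    & f (- h) + h * mu <= e * h].
Proof.
move=> e0; have [r r0 near0] := cgf_dom_near0.
have [del del0 approx] := is_derive_approx is_derive0_centered_cgfR _ e0.
have m0 : 0 < Num.min del r by rewrite lt_min del0 r0.
have [mdel mr] : Num.min del r <= del /\ Num.min del r <= r.
  by split; rewrite ge_min lexx ?orbT.
set h := Num.min del r / 2.
have h0 : 0 < h by rewrite divr_gt0.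
have hdel : h < del by rewrite /h; lra.
have hr : h < r by rewrite /h; lra.
exists h => //; split.
- by apply: near0; rewrite gtr0_norm.
- by apply: near0; rewrite normrN gtr0_norm.
- have := approx h; rewrite gtr0_norm // => /(_ hdel) /ler_normlP[_].
  by rewrite add0r mul0r cgfR0 !subr0 mulr0 subr0.
- have := approx (- h); rewrite normrN gtr0_norm // => /(_ hdel) /ler_normlP[_].
  by rewrite add0r mul0r cgfR0 !subr0 mulr0 subr0 mulNr opprK.
Qed.

Lemma rate_bounded_away rho : 0 < rho -> exists2 eta, 0 < eta &
  forall x, rho <= `|x - mu| -> (eta%:E <= I x)%E.
Proof.
move=> rho0; have rho2 : 0 < rho / 2 by rewrite divr_gt0.
have [h h0 [Dh Dmh fh fmh]] := centered_cgfR_small rho2.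
exists (h * (rho / 2)); first by rewrite mulr_gt0.
move=> x xrho; have [xmu|xmu] := lerP 0 (x - mu).
- apply: le_trans (le_rate x (interior_subset Dh)); rewrite lee_fin.
  rewrite ger0_norm // in xrho.
  have : h * rho <= h * (x - mu) by rewrite ler_wpM2l // ltW.
  lra.
- apply: le_trans (le_rate x (interior_subset Dmh)); rewrite lee_fin.
  rewrite ltr0_norm // in xrho.
  have : h * rho <= h * (- (x - mu)) by rewrite ler_wpM2l // ltW.
  lra.
Qed.

Lemma cgfR_scale_lt {l t} : D l -> l != 0 -> 0 < t < 1 -> f (t * l) < t * f l.
Proof.
move=> Dl l0 t01; have := cgfR_strictly_convex l 0 t Dl cgf_dom0 l0 t01.
by rewrite mulr0 addr0 cgfR0 mulr0 addr0.
Qed.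

Lemma cgfR_gt_mean l : D l -> D (l / 2) -> l != 0 -> l * mu < f l.
Proof.
move=> Dl Dl2 l0; have half01 : 0 < (2^-1 : R) < 1 by apply/andP; split; lra.
have := cgfR_scale_lt Dl l0 half01; rewrite mulrC.
have := cgfR_ge_mean Dl2; lra.
Qed.

(* slopes [l] with [|l| > e0] are dominated, by convexity along the ray
   through [l], by the slopes [+-e0] *)
Lemma affine_le0_far_slope {e0 m l x} : 0 < e0 ->
  (forall s, `|s| = e0 -> m <= f s - s * mu) ->
  D l -> e0 < `|l| -> `|x - mu| <= m / e0 -> l * x - f l <= 0.
Proof.
move=> e00 m_le Dl e0l xmu.
have l0 : 0 < `|l| := lt_trans e00 e0l.
have t01 : 0 < e0 / `|l| < 1 by rewrite divr_gt0 //= ltr_pdivrMr // mul1r.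
have l_neq0 : l != 0 by rewrite -normr_gt0.
have tl_lt := cgfR_scale_lt Dl l_neq0 t01.
have tl_norm : `|e0 / `|l| * l| = e0.
  by rewrite normrM ger0_norm ?divr_ge0 ?ltW // divfK ?lt0r_neq0.
have m_le_tl := m_le _ tl_norm.
have slope_le : e0 / `|l| * (l * (x - mu)) <= m.
  rewrite [X in _ <= X](_ : m = e0 / `|l| * (`|l| * (m / e0))); last first.
    by field; rewrite !lt0r_neq0.
  apply: ler_wpM2l; first by rewrite divr_ge0 ?ltW.
  by apply: le_trans (ler_norm _) _; rewrite normrM ler_wpM2l.
have : e0 / `|l| * (l * x - f l) < 0 by lra.
by rewrite pmulr_rlt0 ?divr_gt0 // => /ltW.
Qed.

Lemma rate_near_mean eps : 0 < eps -> exists2 del, 0 < del &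
  forall x, `|x - mu| <= del -> (I x <= (eps * `|x - mu|)%:E)%E.
Proof.
move=> eps0; have [r r0 near0] := cgf_dom_near0.
set e0 := Num.min eps (r / 2).
have e00 : 0 < e0 by rewrite lt_min eps0 divr_gt0.
have [e0_eps e0_r] : e0 <= eps /\ e0 <= r / 2.
  by split; rewrite ge_min lexx ?orbT.
have Dsmall l : `|l| <= e0 -> D l.
  by move=> le0; apply: interior_subset; apply: near0; lra.
have e0_gt_mean s : `|s| = e0 -> s * mu < f s.
  move=> se0; apply: cgfR_gt_mean; rewrite -?normr_gt0 ?se0 //.
    by apply: Dsmall; rewrite se0.
  by apply: Dsmall; rewrite normrM se0 gtr0_norm //; lra.
set m := Num.min (f e0 - e0 * mu) (f (- e0) - - e0 * mu).
have m0 : 0 < m.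
  by rewrite lt_min !subr_gt0 !e0_gt_mean // ?normrN gtr0_norm.
have m_le s : `|s| = e0 -> m <= f s - s * mu.
  have [s0|s0] := lerP 0 s.
    by rewrite ger0_norm // => ->; rewrite /m ge_min lexx.
  rewrite ltr0_norm // => /eqP; rewrite eqr_oppLR => /eqP ->.
  by rewrite /m ge_min lexx orbT.
exists (m / e0); first by rewrite divr_gt0.
move=> x xmu; apply: rate_le => l Dl.
have eps_ge0 : 0 <= eps * `|x - mu| := mulr_ge0 (ltW eps0) (normr_ge0 _).
have [le0|gte0] := lerP `|l| e0; last first.
  by rewrite (le_trans (affine_le0_far_slope e00 m_le Dl gte0 xmu)).
have := cgfR_ge_mean Dl.
have : l * (x - mu) <= e0 * `|x - mu|.
  by apply: le_trans (ler_norm _) _; rewrite normrM ler_wpM2r.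
have : e0 * `|x - mu| <= eps * `|x - mu| by rewrite ler_wpM2r.
lra.
Qed.

Lemma rate_fin_num x : cgf_F P X x -> I x \is a fin_num.
Proof.
case=> c Dc <-; rewrite ge0_fin_numE ?rate_ge0 //.
apply: le_lt_trans (ltry (c * cgf' P X c - f c)); apply: rate_le => l Dl.
have := strictly_convex_tangent cgfR_strictly_convex (interior_subset Dc)
  (derivableP (cgfR_derivable _ Dc)) _ Dl.
rewrite /cgf' derive1E; lra.
Qed.

End rate_function.

Section inf_weighted_sum.
Context {R : realType}.

Definition inf_wsum (I1 I2 : R -> \bar R) (r1 r2 : R) : \bar R :=
  ereal_inf [set (r1%:E * I1 x + r2%:E * I2 x)%E | x in [set: R]].

Lemma inf_wsumC I1 I2 r1 r2 : inf_wsum I1 I2 r1 r2 = inf_wsum I2 I1 r2 r1.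
Proof. by rewrite /inf_wsum; under eq_imagel do rewrite addeC. Qed.

Lemma inf_wsum_ge0 {I1 I2 : R -> \bar R} {r1 r2 : R} :
  (forall x, (0 <= I1 x)%E) -> (forall x, (0 <= I2 x)%E) ->
  0 <= r1 -> 0 <= r2 ->
  (0 <= inf_wsum I1 I2 r1 r2)%E.
Proof.
move=> I1_ge0 I2_ge0 r10 r20; apply: le_ereal_inf_tmp => _ [x _ <-].
by apply: adde_ge0; apply: mule_ge0; rewrite ?lee_fin.
Qed.

Lemma inf_wsum0l {I1 I2 : R -> \bar R} {c r2 : R} :
  (forall x, (0 <= I2 x)%E) -> I2 c = 0%E -> 0 <= r2 ->
  inf_wsum I1 I2 0 r2 = 0%E.
Proof.
move=> I2_ge0 I2c r20; apply/le_anti/andP; split.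
  by apply: ereal_inf_lbound; exists c; rewrite // I2c mul0e mule0 adde0.
apply: le_ereal_inf_tmp => _ [x _ <-].
by rewrite mul0e add0e mule_ge0 ?lee_fin.
Qed.

Context {I1 I2 : R -> \bar R} {c1 c2 A : R}.
Hypothesis I1_ge0 : forall x, (0 <= I1 x)%E.
Hypothesis I2_ge0 : forall x, (0 <= I2 x)%E.
Hypothesis I1_bounded_away : forall rho, 0 < rho -> exists2 eta, 0 < eta &
  forall x, rho <= `|x - c1| -> (eta%:E <= I1 x)%E.
Hypothesis I1_near : forall eps, 0 < eps -> exists2 del, 0 < del &
  forall x, `|x - c1| <= del -> (I1 x <= (eps * `|x - c1|)%:E)%E.
Hypothesis I2_convex : forall a t, 0 <= t <= 1 ->
  (I2 (t * a + (1 - t) * c2) <= t%:E * I2 a)%E.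
Hypotheses (I2c1 : I2 c1 = A%:E) (A_gt0 : 0 < A).
Hypothesis I2_lsc : forall kap, 0 < kap -> exists2 rho, 0 < rho &
  forall x, `|x - c1| < rho -> ((A - kap)%:E <= I2 x)%E.

Lemma inf_wsum_lt {r1 r2} : 0 < r1 -> 0 < r2 ->
  (inf_wsum I1 I2 r1 r2 < (r2 * A)%:E)%E.
Proof.
move=> r10 r20; set L := `|c2 - c1|.
have L1 : 0 < L + 1 by rewrite ltr_wpDl ?normr_ge0.
set eps := r2 * A / (2 * r1 * (L + 1)).
have eps0 : 0 < eps by rewrite !divr_gt0 ?mulr_gt0.
have [del del0 I1_le] := I1_near _ eps0.
set t := Num.min 1 (del / (L + 1)).
have t0 : 0 < t by rewrite lt_min ltr01 divr_gt0.
have [t1 tdel] : t <= 1 /\ t <= del / (L + 1).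
  by split; rewrite ge_min lexx ?orbT.
set x0 := (1 - t) * c1 + (1 - (1 - t)) * c2.
have x0_c1 : `|x0 - c1| = t * L.
  by rewrite /L -(gtr0_norm t0) -normrM; congr `|_|; rewrite /x0; ring.
have tL : t * L <= del.
  rewrite -(ler_pM2r L1) in tdel; rewrite divfK ?lt0r_neq0 // in tdel.
  by apply: le_trans tdel; rewrite ler_pM2l // lerDl.
apply: (@le_lt_trans _ _ (r1%:E * I1 x0 + r2%:E * I2 x0)%E).
  by apply: ereal_inf_lbound; exists x0.
apply: (@le_lt_trans _ _
  ((r1 * (eps * (t * L)))%:E + (r2 * ((1 - t) * A))%:E)%E).
  apply: leeD; rewrite EFinM; apply: lee_wpmul2l; try by rewrite lee_fin ltW.
    by rewrite -x0_c1; apply: I1_le; rewrite x0_c1.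
  by rewrite EFinM -I2c1; apply: I2_convex; lra.
rewrite -EFinD lte_fin.
have : r1 * (eps * (t * L)) <= t * (r2 * A / 2).
  rewrite (_ : r1 * _ = t * (r2 * A / 2) * (L / (L + 1))); last first.
    by rewrite /eps; field; rewrite !lt0r_neq0.
  rewrite ler_piMr //; first by rewrite !mulr_ge0 // ltW.
  by rewrite ler_pdivrMr // mul1r lerDl.
have : 0 < t * (r2 * A) by rewrite !mulr_gt0.
lra.
Qed.

Lemma inf_wsum_strict_incr_l r1 r1' r2 : 0 < r1 -> r1 < r1' -> 0 < r2 ->
  (inf_wsum I1 I2 r1 r2 < inf_wsum I1 I2 r1' r2)%E.
Proof.
move=> r10 r11 r20.
have G0 := inf_wsum_ge0 I1_ge0 I2_ge0 (ltW r10) (ltW r20).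
have GA := inf_wsum_lt r10 r20.
have Gfin : inf_wsum I1 I2 r1 r2 \is a fin_num.
  by rewrite ge0_fin_numE // (lt_trans GA) ?ltry.
set g := fine (inf_wsum I1 I2 r1 r2).
have Gg : inf_wsum I1 I2 r1 r2 = g%:E by rewrite fineK.
rewrite Gg lte_fin in GA; rewrite Gg.
have kap0 : 0 < (r2 * A - g) / (2 * r2) by rewrite divr_gt0 ?subr_gt0 ?mulr_gt0.
have [rho rho0 I2_ge] := I2_lsc _ kap0.
have [eta eta0 I1_ge] := I1_bounded_away _ rho0.
set m := Num.min ((r2 * A - g) / 2) ((r1' - r1) * eta).
have m0 : 0 < m by rewrite lt_min !divr_gt0 ?mulr_gt0 ?subr_gt0.
have [m_kap m_eta] : m <= (r2 * A - g) / 2 /\ m <= (r1' - r1) * eta.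
  by split; rewrite ge_min lexx ?orbT.
apply: (@lt_le_trans _ _ (g + m)%:E); first by rewrite lte_fin ltrDl.
apply: le_ereal_inf_tmp => _ [x _ <-].
have [near|far] := ltrP `|x - c1| rho.
- apply: lee_paddl; first by rewrite mule_ge0 // lee_fin ltW // (lt_trans r10).
  apply: le_trans _ (lee_wpmul2l _ (I2_ge x near)); last by rewrite lee_fin ltW.
  rewrite -EFinM lee_fin.
  rewrite (_ : r2 * (A - _ / (2 * r2)) = g + (r2 * A - g) / 2); first lra.
  by field; rewrite lt0r_neq0.
- have -> : r1'%:E = ((r1' - r1)%:E + r1%:E)%E by rewrite -EFinD subrK.
  rewrite ge0_muleDl ?lee_fin ?subr_ge0 ?(ltW r10) ?(ltW r11) // -addeA.
  have G_le : (g%:E <= r1%:E * I1 x + r2%:E * I2 x)%E.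
    by rewrite -Gg; apply: ereal_inf_lbound; exists x.
  apply: le_trans _ (leeD (lee_wpmul2l _ (I1_ge x far)) G_le).
    by rewrite -EFinM -EFinD lee_fin; lra.
  by rewrite lee_fin subr_ge0 ltW.
Qed.

End inf_weighted_sum.

Section Gfun_monotonicity.
Context {d : measure_display} {T : measurableType d} {R : realType}.
Variable P : probability T R.

Lemma GfunE (X1 X2 : T -> R) r1 r2 :
  Gfun P X1 X2 r1 r2 = inf_wsum (rate P X1) (rate P X2) r1 r2.
Proof. by []. Qed.

Lemma GfunC (X1 X2 : T -> R) r1 r2 : Gfun P X1 X2 r1 r2 = Gfun P X2 X1 r2 r1.
Proof. exact: inf_wsumC. Qed.

Lemma Gfun0l (X1 : T -> R) (X2 : {RV P >-> R}) mu2 r2 :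
  ('E_P[X2] = mu2%:E)%E -> 0 <= r2 -> Gfun P X1 X2 0 r2 = 0%E.
Proof.
move=> EX2 r20; rewrite GfunE (inf_wsum0l _ (rate_mean EX2) r20) //.
exact: rate_ge0.
Qed.

Lemma Gfun_strict_incr_l (X1 X2 : {RV P >-> R}) mu1 mu2 r1 r1' r2 :
  ('E_P[X1] = mu1%:E)%E -> ('E_P[X2] = mu2%:E)%E ->
  assumption2 P X1 -> assumption3 P X1 ->
  assumption2 P X2 -> assumption3 P X2 ->
  mu1 != mu2 -> cgf_F P X2 mu1 ->
  0 < r1 -> r1 < r1' -> 0 < r2 -> (Gfun P X1 X2 r1 r2 < Gfun P X1 X2 r1' r2)%E.
Proof.
move=> EX1 EX2 A2X1 A3X1 A2X2 A3X2 mu12 mu1_F.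
set A := fine (rate P X2 mu1).
have I2mu1 : rate P X2 mu1 = A%:E.
  by rewrite /A fineK //; exact: rate_fin_num mu1_F.
have A_gt0 : 0 < A.
  have mu12_gt0 : 0 < `|mu1 - mu2| by rewrite normr_gt0 subr_eq0.
  have [eta eta0 I2_ge] := rate_bounded_away EX2 A2X2 A3X2 _ mu12_gt0.
  by rewrite -lte_fin -I2mu1 (lt_le_trans _ (I2_ge _ (lexx _))) ?lte_fin.
rewrite !GfunE; apply: (inf_wsum_strict_incr_l rate_ge0 rate_ge0
  (rate_bounded_away EX1 A2X1 A3X1) (rate_near_mean EX1 A2X1 A3X1)
  (rate_convex_mean EX2) I2mu1 A_gt0 (fun kap => rate_lsc I2mu1)).
Qed.

End Gfun_monotonicity.

Theorem lemma3 (d : measure_display) (T : measurableType d) (R : realType)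
  (P : probability T R) (k m : nat) (X : 'I_k -> {RV P >-> R})
  (mu : 'I_k -> R) (s : 'I_k -> 'I_k)
  (hk : (2 <= k)%N) (hm1 : (1 <= m)%N) (hmk : (m < k)%N)
  (hmean : forall l, ('E_P[X l])%E = (mu l)%:E)
  (hrank : forall a b : 'I_k, (a < b)%N -> mu (s b) < mu (s a))
  (hA2 : forall l, assumption2 P (X l))
  (hA3 : forall l, assumption3 P (X l))
  (hA4 : forall (l : 'I_k) (x : R),
           (exists a, mu a <= x) -> (exists b, x <= mu b) ->
           interior (cgf_F P (X l)) x) :
  forall i j : 'I_k, (i < m)%N -> (m <= j)%N ->
    [/\ (forall ri ri' rj, 0 < ri -> ri < ri' -> 0 < rj ->
           (Gfun P (X (s i)) (X (s j)) ri rj < Gfun P (X (s i)) (X (s j)) ri' rj)%E),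
        (forall ri rj rj', 0 < ri -> 0 < rj -> rj < rj' ->
           (Gfun P (X (s i)) (X (s j)) ri rj < Gfun P (X (s i)) (X (s j)) ri rj')%E) &
        (forall ri rj, 0 <= ri -> 0 <= rj -> Num.min ri rj = 0 ->
           Gfun P (X (s i)) (X (s j)) ri rj = 0%E)].
Proof.
move=> i j im mj.
have mu_ij : mu (s i) != mu (s j) by rewrite gt_eqF // hrank // (leq_trans im mj).
have mu_F l a : cgf_F P (X l) (mu a).
  by apply: interior_subset; apply: hA4; exists a.
split.
- move=> ri ri' rj.
  exact: Gfun_strict_incr_l (hmean _) (hmean _) (hA2 _) (hA3 _) (hA2 _) (hA3 _)
    mu_ij (mu_F _ _).
- move=> ri rj rj' ri0 rj0 rjj; rewrite !(GfunC _ (X (s i))).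
  apply: Gfun_strict_incr_l (hmean _) (hmean _) (hA2 _) (hA3 _) (hA2 _) (hA3 _)
    _ (mu_F _ _) rj0 rjj ri0.
  by rewrite eq_sym.
- move=> ri rj ri0 rj0; rewrite /Num.min; case: ifP => _ ->.
    exact: Gfun0l (hmean _) rj0.
  by rewrite GfunC; exact: Gfun0l (hmean _) ri0.
Qed.
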